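(* Fix reals $r'>r>0$ and Young diagrams $\mu\subseteq\lambda$. Let integers $N'>N$ tend to infinity in such a way that $N'/N\to r'/r$. Regard $\lambda$ as the signature $(\lambda_1,\dots,\lambda_{N'})\in\mathbb S_{N'}$ (padded with zeros) and $\mu$ as the signature $(\mu_1,\dots,\mu_N)\in\mathbb S_N$; this makes sense once $N\ge\ell(\lambda)$. Then $$\lim\Lambda^{N'}_N(\lambda,\mu)={}^{\mathbb{YB}}\Lambda^{r'}_r(\lambda,\mu).$$
   Context: Signatures and links: - $\mathbb S_N$ is the set of integer $N$-tuples $\nu_1\ge\dots\ge\nu_N$. - $\mathrm{Dim}_N\nu=\prod_{1\le i<j\le N}\frac{\nu_i-\nu_j-i+j}{j-i}$. - For $\kappa\in\mathbb S_K$ and $\nu\in\mathbb S_N$ with $K<N$, $\mathrm{Dim}_{K,N}(\kappa,\nu)$ is the number of chains $\kappa=\lambda^{(K)}\prec\dots\prec\lambda^{(N)}=\nu$, $\lambda^{(j)}\in\mathbb S_j$. Here $\lambda\prec\nu$ means $\nu_i\ge\lambda_i\ge\nu_{i+1}$ for all $i$. - The Gelfand–Tsetlin link is $\Lambda^N_K(\nu,\kappa)=\mathrm{Dim}_K\kappa\,\mathrm{Dim}_{K,N}(\kappa,\nu)/\mathrm{Dim}_N\nu$. Young diagrams: $\ell(\lambda)$ is the number of nonzero rows of $\lambda$, and $|\lambda|$ is its number of boxes. $\dim\lambda$ (resp. $\dim\lambda/\mu$) is the number of standard Young tableaux of shape $\lambda$ (resp. skew shape $\lambda/\mu$). The Young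 bouquet link: for $r'>r>0$ and Young diagrams $\lambda,\mu$, $${}^{\mathbb{YB}}\Lambda^{r'}_r(\lambda,\mu)=\binom{|\lambda|}{|\mu|}\Big(\frac{r}{r'}\Big)^{|\mu|}\Big(1-\frac{r}{r'}\Big)^{|\lambda|-|\mu|}\frac{\dim\mu\,\dim\lambda/\mu}{\dim\lambda}$$ if $\mu\subseteq\lambda$, and $0$ otherwise. *)

From Stdlib Require Import Reals Lra Lia ZArith Arith List.
Import ListNotations.
Open Scope R_scope.

Definition prodR (n : nat) (f : nat -> R) : R :=
  fold_right Rmult 1 (map f (seq 0 n)).

(** * Signatures (lists of integers nu_1 >= ... >= nu_N, stored 0-indexed) *)

Definition DimN (N : nat) (nu : list Z) : R :=
  prodR N (fun j => prodR j (fun i =>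
    (IZR (nth i nu 0%Z - nth j nu 0%Z) - INR i + INR j) / (INR j - INR i))).

Definition Zrange (b a : Z) : list Z :=
  map (fun t => (b + Z.of_nat t)%Z) (seq 0 (Z.to_nat (a - b + 1))).

(** all lam in S_{N-1} with lam ≺ nu (nu in S_N): nu_i >= lam_i >= nu_{i+1} *)
Fixpoint interl (nu : list Z) : list (list Z) :=
  match nu with
  | [] => []
  | [a] => [[]]
  | a :: ((b :: _) as rest) =>
      flat_map (fun x => map (cons x) (interl rest)) (Zrange b a)
  end.

Fixpoint chains_count (kap : list Z) (d : nat) (nu : list Z) : nat :=
  match d with
  | O => if list_eq_dec Z.eq_dec kap nu then 1%nat else 0%nat
  | S d' => list_sum (map (chains_count kap d') (interl nu))
  end.

Definition DimKN (K N : nat) (kap nu : list Z) : nat := chains_count kap (N - K) nu.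

Definition GT_link (N K : nat) (nu kap : list Z) : R :=
  DimN K kap * INR (DimKN K N kap nu) / DimN N nu.

Definition young (lam : list nat) : Prop :=
  (forall i, (S i < length lam)%nat -> (nth (S i) lam 0%nat <= nth i lam 0%nat)%nat) /\
  (forall i, (i < length lam)%nat -> (0 < nth i lam 0%nat)%nat).

Definition ell (lam : list nat) : nat := length lam.
Definition size (lam : list nat) : nat := list_sum lam.

Definition contained (mu lam : list nat) : Prop :=
  forall i, (nth i mu 0%nat <= nth i lam 0%nat)%nat.

Definition containedb (mu lam : list nat) : bool :=
  forallb (fun i => Nat.leb (nth i mu 0%nat) (nth i lam 0%nat)) (seq 0 (length mu)).

Definition dec_row (lam : list nat) (i : nat) : list nat :=
  firstn i lam ++ (nth i lam 0%nat - 1)%nat :: skipn (S i) lam.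

(** number of chains mu = nu^0 ⊂ nu^1 ⊂ ... ⊂ nu^d = lam in Young's lattice,
    each step adding one box, i.e. standard Young tableaux of shape lam/mu
    (enumerated by successively removing the box containing the largest entry) *)
Fixpoint skew_count (d : nat) (lam mu : list nat) : nat :=
  match d with
  | O => if containedb mu lam then 1%nat else 0%nat
  | S d' => list_sum (map (fun i =>
        if (Nat.ltb (nth (S i) lam 0%nat) (nth i lam 0%nat) && Nat.ltb (nth i mu 0%nat) (nth i lam 0%nat))%bool
        then skew_count d' (dec_row lam i) mu else 0%nat) (seq 0 (length lam)))
  end.

Definition dim_skew (lam mu : list nat) : nat :=
  if containedb mu lam then skew_count (size lam - size mu) lam mu else 0%nat.
Definition dim (lam : list nat) : nat := dim_skew lam [].

Definition YB_link (r' r : R) (lam mu : list nat) : R :=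
  if containedb mu lam then
    Binomial.C (size lam) (size mu) * (r / r') ^ (size mu)
    * (1 - r / r') ^ (size lam - size mu)
    * (INR (dim mu) * INR (dim_skew lam mu) / INR (dim lam))
  else 0.

Definition sig_of (N : nat) (lam : list nat) : list Z :=
  map Z.of_nat (firstn N (lam ++ repeat 0%nat N)).

From Stdlib Require Import Reals Lra Lia ZArith Arith List.
From Coquelicot Require Import Coquelicot.
Import ListNotations.
Open Scope R_scope.

(* For a fixed diagram [x] padded with zeros, [Dim_N x] is a polynomial in [N] whose
   leading term is [N^|x| dim x / |x|!]: padding adds Vandermonde factors that telescope
   into rising factorials, and [dim x / |x|!] is Frobenius' product, which one checks
   against the recursion defining [dim] through Lagrange interpolation identities.
   Likewise the number of Gelfand–Tsetlin chains of length [D] from [lam] down to [mu]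
   grows like [D^(|lam|-|mu|) dim(lam/mu) / (|lam|-|mu|)!]: one more step of the chain
   sums the counts over the diagrams interlacing with [lam], those with one box less are
   exactly [lam] minus a corner, and Stolz–Cesàro turns this into the branching rule for
   [dim(lam/mu)]. Dividing [Dim_N mu * Dim_{N,N'}(mu, lam)] by [Dim_N' lam] and using
   [N/N' -> r/r'] and [(N'-N)/N' -> 1 - r/r'] gives the Young bouquet link. *)

(** * Limits of sequences and the Stolz–Cesàro theorem *)

Lemma stolz_cesaro_partial_sums (a b : nat -> R) (L e : R) (n0 : nat) :
  (forall n, b n < b (S n)) ->
  (forall n, (n0 <= n)%nat -> Rabs ((a (S n) - a n) / (b (S n) - b n) - L) < e) ->
  forall m, Rabs (a (m + n0)%nat - a n0 - L * (b (m + n0)%nat - b n0))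
            <= e * (b (m + n0)%nat - b n0).
Proof.
  intros Hb Hq. induction m as [|m IH].
  - simpl. replace (a n0 - a n0 - L * (b n0 - b n0)) with 0 by ring.
    rewrite Rabs_R0. lra.
  - replace (S m + n0)%nat with (S (m + n0)) by lia.
    specialize (Hq (m + n0)%nat ltac:(lia)). specialize (Hb (m + n0)%nat).
    set (da := a (S (m + n0)) - a (m + n0)%nat) in *.
    set (db := b (S (m + n0)) - b (m + n0)%nat) in *.
    assert (Hdb : 0 < db) by (unfold db; lra).
    assert (Hstep : Rabs (da - L * db) <= e * db).
    { replace (da - L * db) with ((da / db - L) * db) by (field; lra).
      rewrite Rabs_mult, (Rabs_right db) by lra.
      apply Rmult_le_compat_r; lra. }
    replace (a (S (m + n0)) - a n0 - L * (b (S (m + n0)) - b n0)) with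
      ((a (m + n0)%nat - a n0 - L * (b (m + n0)%nat - b n0)) + (da - L * db))
      by (unfold da, db; ring).
    eapply Rle_trans; [apply Rabs_triang|].
    replace (e * (b (S (m + n0)) - b n0)) with
      (e * (b (m + n0)%nat - b n0) + e * db) by (unfold db; ring).
    lra.
Qed.

Lemma stolz_cesaro (a b : nat -> R) (L : R) :
  (forall n, 0 <= b n < b (S n)) ->
  (forall M, exists N, forall n, (N <= n)%nat -> M < b n) ->
  Un_cv (fun n => (a (S n) - a n) / (b (S n) - b n)) L ->
  Un_cv (fun n => a n / b n) L.
Proof.
  intros Hb Hinf Hc eps Heps.
  destruct (Hc (eps / 2)) as [n0 Hn0]; [lra|].
  assert (Hpart := stolz_cesaro_partial_sums a b L (eps / 2) n0
                     (fun n => proj2 (Hb n)) Hn0).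
  set (c := Rabs (a n0 - L * b n0)).
  assert (Hc0 : 0 <= c) by apply Rabs_pos.
  destruct (Hinf (2 * c / eps + 1)) as [n1 Hn1].
  exists (n0 + n1)%nat. intros n Hn.
  assert (Hbn : 2 * c / eps + 1 < b n) by (apply Hn1; lia).
  assert (Hpos : 0 < b n).
  { assert (0 <= 2 * c / eps) by (apply Rdiv_le_0_compat; lra). lra. }
  specialize (Hpart (n - n0)%nat). replace (n - n0 + n0)%nat with n in Hpart by lia.
  unfold Rdist.
  replace (a n / b n - L) with
    ((a n0 - L * b n0) / b n + (a n - a n0 - L * (b n - b n0)) / b n)
    by (field; lra).
  eapply Rle_lt_trans; [apply Rabs_triang|].
  rewrite !Rabs_div by lra. rewrite (Rabs_right (b n)) by lra. fold c.
  assert (Hhead : c / b n < eps / 2).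
  { apply Rmult_lt_reg_r with (b n); [lra|].
    replace (c / b n * b n) with c by (field; lra).
    replace (2 * c / eps + 1) with ((2 * c + eps) / eps) in Hbn by (field; lra).
    apply Rmult_lt_compat_r with (r := eps) in Hbn; [|lra].
    replace ((2 * c + eps) / eps * eps) with (2 * c + eps) in Hbn by (field; lra).
    lra. }
  assert (Hb0 : 0 <= b n0) by apply Hb.
  assert (Htail : Rabs (a n - a n0 - L * (b n - b n0)) / b n <= eps / 2).
  { apply Rmult_le_reg_r with (b n); [lra|].
    replace (Rabs (a n - a n0 - L * (b n - b n0)) / b n * b n)
      with (Rabs (a n - a n0 - L * (b n - b n0))) by (field; lra).
    nra. }
  lra.
Qed.

Lemma is_lim_seq_inv_INR : is_lim_seq (fun n => / INR n) 0.
Proof.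
  replace (Finite 0) with (Rbar_inv p_infty) by reflexivity.
  apply is_lim_seq_inv; [apply is_lim_seq_INR | discriminate].
Qed.

Lemma is_lim_seq_inv_pow_INR (j : nat) : is_lim_seq (fun n => / INR n ^ S j) 0.
Proof.
  induction j as [|j IH].
  - apply is_lim_seq_ext with (fun n => / INR n); [intros n; simpl; now rewrite Rmult_1_r|].
    apply is_lim_seq_inv_INR.
  - apply is_lim_seq_ext with (fun n => / INR n * / INR n ^ S j).
    { intros n. change (INR n ^ S (S j)) with (INR n * INR n ^ S j). now rewrite Rinv_mult. }
    replace (Finite 0) with (Finite (0 * 0)) by (f_equal; ring).
    apply is_lim_seq_mult'; [apply is_lim_seq_inv_INR | exact IH].
Qed.

Lemma is_lim_seq_shift_ratio (c : R) : is_lim_seq (fun n => (INR n + c) / INR n) 1.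
Proof.
  apply is_lim_seq_ext_loc with (fun n => 1 + c * / INR n).
  - exists 1%nat. intros n Hn. field. apply not_0_INR. lia.
  - replace (Finite 1) with (Finite (1 + c * 0)) by (f_equal; ring).
    apply is_lim_seq_plus'; [apply is_lim_seq_const|].
    exact (is_lim_seq_scal_l _ c _ is_lim_seq_inv_INR).
Qed.

Lemma is_lim_seq_pow_nat (u : nat -> R) (l : R) (j : nat) :
  is_lim_seq u l -> is_lim_seq (fun n => u n ^ j) (l ^ j).
Proof.
  intros Hu. induction j as [|j IH]; simpl.
  - apply is_lim_seq_const.
  - apply is_lim_seq_mult'; assumption.
Qed.

Lemma INR_pow_lt_S (n e : nat) : INR n ^ S e < INR (S n) ^ S e.
Proof. rewrite <- !pow_INR. apply lt_INR, Nat.pow_lt_mono_l; lia. Qed.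

Lemma is_lim_seq_pow_increment (e : nat) :
  is_lim_seq (fun n => (INR (S n) ^ S e - INR n ^ S e) / INR n ^ e) (INR (S e)).
Proof.
  induction e as [|e IH].
  - apply is_lim_seq_ext with (fun _ => 1); [intros n; rewrite S_INR; simpl; field|].
    apply is_lim_seq_const.
  - apply is_lim_seq_ext_loc with
      (fun n => (INR n + 1) / INR n * ((INR (S n) ^ S e - INR n ^ S e) / INR n ^ e) + 1).
    + exists 1%nat. intros n Hn.
      assert (INR n <> 0) by (apply not_0_INR; lia).
      rewrite S_INR. cbn [pow]. field. split; [|assumption]. now apply pow_nonzero.
    + replace (INR (S (S e))) with (1 * INR (S e) + 1) by (rewrite (S_INR (S e)); ring).
      apply is_lim_seq_plus'; [|apply is_lim_seq_const].
      apply is_lim_seq_mult'; [apply is_lim_seq_shift_ratio | exact IH].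
Qed.

Lemma stolz_cesaro_pow (a s : nat -> R) (e : nat) (l : R) :
  (forall n, a (S n) = a n + s n) ->
  is_lim_seq (fun n => s n / INR n ^ e) l ->
  is_lim_seq (fun n => a n / INR n ^ S e) (l / INR (S e)).
Proof.
  intros Ha Hs. apply is_lim_seq_Reals, stolz_cesaro.
  - intros n. split; [apply pow_le, pos_INR | apply INR_pow_lt_S].
  - intros M. destruct (INR_unbounded M) as [N HN]. exists (S N). intros n Hn.
    assert (Hn1 : 1 <= INR n) by (apply (le_INR 1); lia).
    assert (INR N <= INR n) by (apply le_INR; lia).
    assert (INR n <= INR n ^ S e).
    { rewrite <- (pow_1 (INR n)) at 1. apply Rle_pow; [lra | lia]. }
    lra.
  - apply is_lim_seq_Reals.
    apply is_lim_seq_ext_loc with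
      (fun n => (s n / INR n ^ e) / ((INR (S n) ^ S e - INR n ^ S e) / INR n ^ e)).
    + exists 1%nat. intros n Hn. rewrite Ha.
      assert (INR n ^ e <> 0) by (apply pow_nonzero, not_0_INR; lia).
      assert (INR (S n) ^ S e - INR n ^ S e <> 0) by (pose proof (INR_pow_lt_S n e); lra).
      field. auto.
    + apply is_lim_seq_div'; [exact Hs | apply is_lim_seq_pow_increment |].
      apply not_0_INR. lia.
Qed.

Lemma is_lim_seq_div_pow_gt (u : nat -> R) (a b : nat) (c : R) : (a < b)%nat ->
  is_lim_seq (fun n => u n / INR n ^ a) c -> is_lim_seq (fun n => u n / INR n ^ b) 0.
Proof.
  intros Hab Hu.
  apply is_lim_seq_ext_loc with (fun n => u n / INR n ^ a * / INR n ^ S (b - a - 1)).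
  - exists 1%nat. intros n Hn. assert (INR n <> 0) by (apply not_0_INR; lia).
    replace b with (a + S (b - a - 1))%nat at 2 by lia.
    rewrite pow_add. field. split; now apply pow_nonzero.
  - replace (Finite 0) with (Finite (c * 0)) by (f_equal; ring).
    apply is_lim_seq_mult'; [exact Hu | apply is_lim_seq_inv_pow_INR].
Qed.

Definition sumL {A} (l : list A) (F : A -> R) : R := fold_right Rplus 0 (map F l).

Definition sumR (n : nat) (f : nat -> R) : R := sumL (seq 0 n) f.

Lemma fold_right_Rplus_init (l : list R) (c : R) :
  fold_right Rplus c l = fold_right Rplus 0 l + c.
Proof. induction l as [|x l IH]; simpl; [ring | rewrite IH; ring]. Qed.

Lemma fold_right_Rmult_init (l : list R) (c : R) :
  fold_right Rmult c l = fold_right Rmult 1 l * c.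
Proof. induction l as [|x l IH]; simpl; [ring | rewrite IH; ring]. Qed.

Lemma sumR_S n f : sumR (S n) f = sumR n f + f n.
Proof.
  unfold sumR, sumL. rewrite seq_S, map_app, fold_right_app. simpl.
  rewrite fold_right_Rplus_init. ring.
Qed.

Lemma prodR_S n f : prodR (S n) f = prodR n f * f n.
Proof.
  unfold prodR. rewrite seq_S, map_app, fold_right_app. simpl.
  rewrite fold_right_Rmult_init. ring.
Qed.

Lemma sumR_ext n f g : (forall i, (i < n)%nat -> f i = g i) -> sumR n f = sumR n g.
Proof. induction n; intros H; [reflexivity|]. rewrite !sumR_S, IHn, H; auto. Qed.

Lemma prodR_ext n f g : (forall i, (i < n)%nat -> f i = g i) -> prodR n f = prodR n g.
Proof. induction n; intros H; [reflexivity|]. rewrite !prodR_S, IHn, H; auto. Qed.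

Lemma sumR_plus n f g : sumR n (fun i => f i + g i) = sumR n f + sumR n g.
Proof. induction n; [cbn; ring|]. rewrite !sumR_S, IHn. ring. Qed.

Lemma sumR_scal n a f : sumR n (fun i => a * f i) = a * sumR n f.
Proof. induction n; [cbn; ring|]. rewrite !sumR_S, IHn. ring. Qed.

Lemma sumR_INR k : sumR k INR = INR k * (INR k - 1) / 2.
Proof. induction k; [cbn; field|]. rewrite sumR_S, IHk, S_INR. field. Qed.

Lemma sumR_shift n f : sumR (S n) f = f 0%nat + sumR n (fun i => f (S i)).
Proof. induction n; [cbn; ring|]. rewrite sumR_S, IHn, sumR_S. ring. Qed.

Lemma sumR_update n f g i : (i < n)%nat ->
  (forall t, (t < n)%nat -> t <> i -> g t = f t) ->
  sumR n g = sumR n f + (g i - f i).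
Proof.
  induction n; intros Hi H; [lia|]. rewrite !sumR_S.
  destruct (Nat.eq_dec i n) as [->|Hne].
  - rewrite (sumR_ext n g f); [ring|]. intros t Ht. apply H; lia.
  - rewrite IHn, (H n) by (auto; lia). ring.
Qed.

Lemma prodR_mult n f g : prodR n (fun i => f i * g i) = prodR n f * prodR n g.
Proof. induction n; [cbn; ring|]. rewrite !prodR_S, IHn. ring. Qed.

Lemma prodR_1 n : prodR n (fun _ => 1) = 1.
Proof. induction n; [reflexivity|]. rewrite prodR_S, IHn. ring. Qed.

Lemma prodR_pos n f : (forall i, (i < n)%nat -> 0 < f i) -> 0 < prodR n f.
Proof.
  induction n; intros H; [cbn; lra|]. rewrite prodR_S.
  apply Rmult_lt_0_compat; auto.
Qed.

Lemma prodR_inv n f : (forall i, (i < n)%nat -> f i <> 0) ->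
  prodR n (fun i => / f i) = / prodR n f.
Proof.
  induction n; intros H; [cbn; field|]. rewrite !prodR_S, IHn, Rinv_mult by auto.
  reflexivity.
Qed.

Lemma prodR_eq0 n f i : (i < n)%nat -> f i = 0 -> prodR n f = 0.
Proof.
  induction n; intros Hi H; [lia|]. rewrite prodR_S.
  destruct (Nat.eq_dec i n) as [->|]; [rewrite H; ring|].
  rewrite IHn; [ring | lia | auto].
Qed.

Lemma prodR_update n f g i : (i < n)%nat -> f i <> 0 ->
  (forall t, (t < n)%nat -> t <> i -> g t = f t) ->
  prodR n g = prodR n f * (g i / f i).
Proof.
  induction n; intros Hi Hf H; [lia|]. rewrite !prodR_S.
  destruct (Nat.eq_dec i n) as [->|Hne].
  - rewrite (prodR_ext n g f); [field; auto|]. intros t Ht. apply H; lia.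
  - rewrite IHn, (H n) by (auto; lia). ring.
Qed.

Lemma prodR_shift n f : prodR (S n) f = f 0%nat * prodR n (fun i => f (S i)).
Proof. induction n; [cbn; ring|]. rewrite prodR_S, IHn, prodR_S. ring. Qed.

Lemma prodR_add k t f : prodR (k + t) f = prodR k f * prodR t (fun s => f (k + s)%nat).
Proof.
  induction t; [rewrite Nat.add_0_r; cbn; ring|].
  rewrite Nat.add_succ_r, !prodR_S, IHt. ring.
Qed.

Lemma prodR_swap m k F : prodR m (fun t => prodR k (fun i => F i t)) =
                         prodR k (fun i => prodR m (fun t => F i t)).
Proof.
  induction m; [symmetry; apply prodR_1|].
  rewrite prodR_S, IHm, <- prodR_mult. apply prodR_ext. intros i _. now rewrite prodR_S.
Qed.

Lemma prodR_div_pow v f y : y <> 0 -> prodR v f / y ^ v = prodR v (fun s => f s / y).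
Proof.
  intros Hy. induction v; [cbn; field|].
  rewrite !prodR_S, <- IHv. simpl. field. split; try apply pow_nonzero; auto.
Qed.

Lemma INR_list_sum_map {A} (g : A -> nat) (l : list A) :
  INR (list_sum (map g l)) = sumL l (fun a => INR (g a)).
Proof. induction l as [|a l IH]; simpl; [reflexivity|]. now rewrite plus_INR, IH. Qed.


Lemma is_lim_seq_prodR n (f : nat -> nat -> R) (L : nat -> R) :
  (forall i, (i < n)%nat -> is_lim_seq (fun N => f i N) (L i)) ->
  is_lim_seq (fun N => prodR n (fun i => f i N)) (prodR n L).
Proof.
  induction n; intros H; [apply is_lim_seq_const|].
  rewrite prodR_S. apply is_lim_seq_ext with (fun N => prodR n (fun i => f i N) * f n N).
  { intros; now rewrite prodR_S. }
  apply is_lim_seq_mult'; auto.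
Qed.

Lemma sumL_app {A} (l1 l2 : list A) F : sumL (l1 ++ l2) F = sumL l1 F + sumL l2 F.
Proof. unfold sumL. now rewrite map_app, fold_right_app, fold_right_Rplus_init, Rplus_comm. Qed.

Lemma sumL_map {A B} (h : A -> B) l F : sumL (map h l) F = sumL l (fun a => F (h a)).
Proof. unfold sumL. now rewrite map_map. Qed.

Lemma sumL_flat_map {A B} (G : A -> list B) l F :
  sumL (flat_map G l) F = sumL l (fun a => sumL (G a) F).
Proof. induction l as [|a l IH]; [reflexivity|]. simpl. rewrite sumL_app, IH. reflexivity. Qed.

Lemma sumL_ext_in {A} (l : list A) F G : (forall a, In a l -> F a = G a) ->
  sumL l F = sumL l G.
Proof. intros H. unfold sumL. f_equal. now apply map_ext_in. Qed.

Lemma sumL_plus {A} (l : list A) F G : sumL l (fun a => F a + G a) = sumL l F + sumL l G.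
Proof. unfold sumL. induction l as [|a l IH]; simpl; [ring | rewrite IH; ring]. Qed.

Lemma sumL_div {A} (l : list A) F c : sumL l (fun a => F a / c) = sumL l F / c.
Proof. unfold sumL, Rdiv. induction l as [|a l IH]; simpl; [ring | rewrite IH; ring]. Qed.

Lemma sumL_eq0 {A} (l : list A) F : (forall a, In a l -> F a = 0) -> sumL l F = 0.
Proof.
  intros H. rewrite (sumL_ext_in l F (fun _ => 0)) by auto. clear H.
  unfold sumL. induction l as [|a l IH]; simpl; [reflexivity | rewrite IH; ring].
Qed.

Lemma is_lim_seq_sumL {A} (l : list A) (f : A -> nat -> R) (g : A -> R) :
  (forall a, In a l -> is_lim_seq (fun n => f a n) (g a)) ->
  is_lim_seq (fun n => sumL l (fun a => f a n)) (sumL l g).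
Proof.
  induction l as [|a l IH]; intros H; [apply is_lim_seq_const|].
  apply is_lim_seq_plus'; [apply H; now left|]. apply IH. intros; apply H; now right.
Qed.

(** * Lagrange interpolation identities *)

Definition distinct_on (k : nat) (l : nat -> R) : Prop :=
  forall i j, (i < k)%nat -> (j < k)%nat -> i <> j -> l i <> l j.

Definition lagrange_weight (k : nat) (l : nat -> R) (i : nat) : R :=
  prodR k (fun j => if Nat.eq_dec j i then 1 else (l i - 1 - l j) / (l i - l j)).

Definition lagrange_prod (k : nat) (l : nat -> R) (c : R) : R :=
  prodR k (fun j => (c - l j - 1) / (c - l j)).

Lemma distinct_on_S k l : distinct_on (S k) l -> distinct_on k l.
Proof. intros H i j Hi Hj. apply H; lia. Qed.

Lemma lagrange_weight_S k l i : (i < k)%nat ->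
  lagrange_weight (S k) l i = lagrange_weight k l i * ((l i - 1 - l k) / (l i - l k)).
Proof.
  intros Hi. unfold lagrange_weight. rewrite prodR_S.
  destruct (Nat.eq_dec k i); [lia | reflexivity].
Qed.

Lemma lagrange_weight_last k l : lagrange_weight (S k) l k = lagrange_prod k l (l k).
Proof.
  unfold lagrange_weight, lagrange_prod. rewrite prodR_S.
  destruct (Nat.eq_dec k k) as [_|]; [|lia]. rewrite Rmult_1_r.
  apply prodR_ext. intros j Hj. destruct (Nat.eq_dec j k); [lia|]. f_equal. ring.
Qed.

Lemma lagrange_partial_fractions k l c : distinct_on k l ->
  (forall j, (j < k)%nat -> c <> l j) ->
  1 + sumR k (fun i => lagrange_weight k l i / (l i - c)) = lagrange_prod k l c.
Proof.
  revert c. induction k as [|k IH]; intros c Hl Hc; [cbn; ring|].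
  assert (Hlk : forall j, (j < k)%nat -> l j <> l k) by (intros j Hj; apply Hl; lia).
  assert (Hck : c <> l k) by (apply Hc; lia).
  rewrite sumR_S, lagrange_weight_last.
  rewrite (sumR_ext k _ (fun i => (1 - 1 / (c - l k)) * (lagrange_weight k l i / (l i - c))
                             + 1 / (c - l k) * (lagrange_weight k l i / (l i - l k)))).
  2:{ intros i Hi. rewrite lagrange_weight_S by lia.
      assert (c <> l i) by (apply Hc; lia). specialize (Hlk i Hi).
      field. repeat split; lra. }
  rewrite sumR_plus, !sumR_scal.
  assert (E1 := IH c (distinct_on_S _ _ Hl) (fun j Hj => Hc j ltac:(lia))).
  assert (E2 := IH (l k) (distinct_on_S _ _ Hl) (fun j Hj => not_eq_sym (Hlk j Hj))).
  unfold lagrange_prod at 2. rewrite prodR_S. fold (lagrange_prod k l c).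
  replace (sumR k (fun i => lagrange_weight k l i / (l i - c)))
    with (lagrange_prod k l c - 1) by lra.
  replace (sumR k (fun i => lagrange_weight k l i / (l i - l k)))
    with (lagrange_prod k l (l k) - 1) by lra.
  field. lra.
Qed.

Lemma sumR_lagrange_weight k l : distinct_on k l -> sumR k (lagrange_weight k l) = INR k.
Proof.
  induction k as [|k IH]; intros Hl; [reflexivity|].
  assert (Hlk : forall j, (j < k)%nat -> l j <> l k) by (intros j Hj; apply Hl; lia).
  rewrite sumR_S, lagrange_weight_last.
  rewrite (sumR_ext k _ (fun i => lagrange_weight k l i
                             + (-1) * (lagrange_weight k l i / (l i - l k)))).
  2:{ intros i Hi. rewrite lagrange_weight_S by lia. specialize (Hlk i Hi). field. lra. }
  rewrite sumR_plus, sumR_scal, IH by (now apply distinct_on_S).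
  assert (E := lagrange_partial_fractions k l (l k) (distinct_on_S _ _ Hl)
                 (fun j Hj => not_eq_sym (Hlk j Hj))).
  rewrite S_INR. lra.
Qed.

Lemma sumR_lagrange_weight_mul k l : distinct_on k l ->
  sumR k (fun i => l i * lagrange_weight k l i) = sumR k l - INR k * (INR k - 1) / 2.
Proof.
  induction k as [|k IH]; intros Hl; [cbn; field|].
  assert (Hlk : forall j, (j < k)%nat -> l j <> l k) by (intros j Hj; apply Hl; lia).
  rewrite !sumR_S, lagrange_weight_last.
  rewrite (sumR_ext k _ (fun i => (l i * lagrange_weight k l i + (-1) * lagrange_weight k l i)
                             + (- l k) * (lagrange_weight k l i / (l i - l k)))).
  2:{ intros i Hi. rewrite lagrange_weight_S by lia. specialize (Hlk i Hi). field. lra. }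
  rewrite !sumR_plus, !sumR_scal, IH, sumR_lagrange_weight by (now apply distinct_on_S).
  assert (E := lagrange_partial_fractions k l (l k) (distinct_on_S _ _ Hl)
                 (fun j Hj => not_eq_sym (Hlk j Hj))).
  replace (sumR k (fun i => lagrange_weight k l i / (l i - l k)))
    with (lagrange_prod k l (l k) - 1) by lra.
  rewrite S_INR. field.
Qed.

(** * The Frobenius formula for [dim] *)

Definition nonincr (x : list nat) : Prop := forall i, (nth (S i) x 0 <= nth i x 0)%nat.

Lemma nonincr_antitone x : nonincr x -> forall i j, (i <= j)%nat -> (nth j x 0 <= nth i x 0)%nat.
Proof. intros Hx i j Hij. induction Hij as [|m _ IH]; [lia|]. specialize (Hx m). lia. Qed.

Lemma young_nonincr x : young x -> nonincr x.
Proof.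
  intros [Hx _] i. destruct (Nat.lt_ge_cases (S i) (length x)).
  - now apply Hx.
  - rewrite (nth_overflow x) by lia. lia.
Qed.

Lemma size_cons a x : size (a :: x) = (a + size x)%nat.
Proof. reflexivity. Qed.

Lemma INR_size x : INR (size x) = sumR (length x) (fun i => INR (nth i x 0%nat)).
Proof.
  unfold size. induction x as [|a x IH]; [reflexivity|].
  simpl length. rewrite sumR_shift. simpl list_sum. now rewrite plus_INR, IH.
Qed.

Lemma list_sum_eq0_nth x : list_sum x = 0%nat -> forall i, nth i x 0%nat = 0%nat.
Proof.
  induction x as [|a x IH]; intros H i; [now destruct i|].
  simpl in H. destruct i; simpl; [lia|]. apply IH. lia.
Qed.

Lemma length_dec_row x i : (i < length x)%nat -> length (dec_row x i) = length x.
Proof.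
  intros Hi. unfold dec_row. rewrite length_app, firstn_length_le by lia.
  cbn [length]. rewrite length_skipn. lia.
Qed.

Lemma nth_dec_row x i j : (i < length x)%nat ->
  nth j (dec_row x i) 0%nat = if Nat.eq_dec j i then (nth i x 0 - 1)%nat else nth j x 0%nat.
Proof.
  intros Hi. unfold dec_row.
  assert (Hl : length (firstn i x) = i) by (apply firstn_length_le; lia).
  destruct (Nat.eq_dec j i) as [->|Hne].
  - rewrite <- Hl at 1. apply nth_middle.
  - destruct (Nat.lt_ge_cases j i).
    + rewrite app_nth1, nth_firstn by lia. destruct (Nat.ltb_spec j i); [reflexivity | lia].
    + rewrite app_nth2 by lia. rewrite Hl.
      destruct (j - i)%nat eqn:E; [lia|]. cbn [nth]. rewrite nth_skipn. f_equal. lia.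
Qed.

Lemma size_dec_row x i : (i < length x)%nat -> (1 <= nth i x 0)%nat ->
  S (size (dec_row x i)) = size x.
Proof.
  intros Hi Hxi. apply INR_eq. rewrite S_INR, !INR_size, length_dec_row by auto.
  rewrite (sumR_update (length x) (fun j => INR (nth j x 0%nat))
             (fun j => INR (nth j (dec_row x i) 0%nat)) i Hi).
  - rewrite nth_dec_row by auto. destruct (Nat.eq_dec i i); [|lia].
    rewrite minus_INR by lia. simpl. ring.
  - intros t Ht Hti. rewrite nth_dec_row by auto. now destruct (Nat.eq_dec t i).
Qed.

Lemma nonincr_dec_row x i : nonincr x -> (i < length x)%nat ->
  (nth (S i) x 0 < nth i x 0)%nat -> nonincr (dec_row x i).
Proof.
  intros Hx Hi Hc j. rewrite !nth_dec_row by auto. specialize (Hx j).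
  destruct (Nat.eq_dec (S j) i), (Nat.eq_dec j i); subst; lia.
Qed.

Definition vandermonde (k : nat) (l : nat -> R) : R :=
  prodR k (fun j => prodR j (fun i => (l i - l j) / (INR j - INR i))).

Lemma vandermonde_ext k l l' : (forall j, (j < k)%nat -> l j = l' j) ->
  vandermonde k l = vandermonde k l'.
Proof.
  intros H. apply prodR_ext. intros j Hj. apply prodR_ext. intros i Hi.
  rewrite !H by lia. reflexivity.
Qed.

Lemma vandermonde_opp_INR k : vandermonde k (fun j => - INR j) = 1.
Proof.
  rewrite <- (prodR_1 k). apply prodR_ext. intros j Hj.
  rewrite <- (prodR_1 j). apply prodR_ext. intros i Hi.
  assert (INR i < INR j) by (apply lt_INR; lia). field. lra.
Qed.

Definition decr_at (l : nat -> R) (i : nat) : nat -> R :=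
  fun j => if Nat.eq_dec j i then l i - 1 else l j.

Lemma vandermonde_decr_at k l i : (i < k)%nat -> distinct_on k l ->
  vandermonde k (decr_at l i) = vandermonde k l * lagrange_weight k l i.
Proof.
  induction k as [|k IH]; intros Hi Hl; [lia|].
  assert (Hgap : forall j, (j < k)%nat -> INR k - INR j <> 0)
    by (intros j Hj; assert (INR j < INR k) by (apply lt_INR; lia); lra).
  unfold vandermonde. rewrite !prodR_S. fold (vandermonde k (decr_at l i)) (vandermonde k l).
  destruct (Nat.eq_dec i k) as [->|Hne].
  - rewrite (vandermonde_ext k (decr_at l k) l).
    2:{ intros j Hj. unfold decr_at. destruct (Nat.eq_dec j k); [lia | reflexivity]. }
    unfold lagrange_weight. rewrite prodR_S. destruct (Nat.eq_dec k k) as [_|]; [|lia].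
    rewrite (prodR_ext k (fun j => (decr_at l k j - decr_at l k k) / (INR k - INR j))
       (fun j => (l j - l k) / (INR k - INR j) *
          (if Nat.eq_dec j k then 1 else (l k - 1 - l j) / (l k - l j)))).
    { rewrite prodR_mult. ring. }
    intros j Hj. unfold decr_at. destruct (Nat.eq_dec j k); [lia|].
    destruct (Nat.eq_dec k k) as [_|]; [|lia].
    assert (l j <> l k) by (apply Hl; lia). specialize (Hgap j Hj).
    field. split; lra.
  - rewrite IH, lagrange_weight_S by (auto using distinct_on_S; lia).
    assert (l i <> l k) by (apply Hl; lia). specialize (Hgap i ltac:(lia)).
    rewrite (prodR_update k (fun j => (l j - l k) / (INR k - INR j))
               (fun j => (decr_at l i j - decr_at l i k) / (INR k - INR j)) i).
    + unfold decr_at. destruct (Nat.eq_dec i i) as [_|]; [|lia].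
      destruct (Nat.eq_dec k i); [lia|]. field. split; lra.
    + lia.
    + unfold Rdiv. apply Rmult_integral_contrapositive_currified; [lra|].
      now apply Rinv_neq_0_compat.
    + intros t Ht Hti. unfold decr_at.
      destruct (Nat.eq_dec t i), (Nat.eq_dec k i); [lia..|reflexivity].
Qed.

(* With [l_j = x_j - j] and [k = length x], [frobenius_ratio x] is
   [prod_(i<j) (l_i - l_j) / prod_i (l_i + k - 1)!], i.e. Frobenius' expression of
   [dim x / |x|!] (see [INR_dim]); the factors [1/(j-i)] of [vandermonde] are absorbed
   into the rising factorials [rising k i x_i = (k-i) (k-i+1) ... (k-i+x_i-1)]. *)
Definition shifted (x : list nat) (j : nat) : R := INR (nth j x 0%nat) - INR j.

Definition rising (k i v : nat) : R := prodR v (fun s => INR k - INR i + INR s).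

Definition frobenius_ratio (x : list nat) : R :=
  vandermonde (length x) (shifted x)
  / prodR (length x) (fun i => rising (length x) i (nth i x 0%nat)).

Lemma rising_pos k i v : (i < k)%nat -> 0 < rising k i v.
Proof.
  intros H. apply prodR_pos. intros s _.
  assert (INR i < INR k) by (apply lt_INR; lia). pose proof (pos_INR s). lra.
Qed.

Lemma rising_S k i v : rising k i (S v) = rising k i v * (INR k - INR i + INR v).
Proof. apply prodR_S. Qed.

Lemma shifted_lt x i j : nonincr x -> (i < j)%nat -> shifted x j < shifted x i.
Proof.
  intros Hx Hij. unfold shifted.
  assert (INR (nth j x 0%nat) <= INR (nth i x 0%nat))
    by (apply le_INR, nonincr_antitone; auto; lia).
  assert (INR i < INR j) by (apply lt_INR; lia). lra.
Qed.

Lemma shifted_distinct x : nonincr x -> distinct_on (length x) (shifted x).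
Proof.
  intros Hx i j _ _ Hij.
  destruct (Nat.lt_ge_cases i j) as [H|H].
  - pose proof (shifted_lt x i j Hx H). lra.
  - pose proof (shifted_lt x j i Hx ltac:(lia)). lra.
Qed.

Lemma vandermonde_shifted_pos x : nonincr x -> 0 < vandermonde (length x) (shifted x).
Proof.
  intros Hx. apply prodR_pos. intros j Hj. apply prodR_pos. intros i Hi.
  pose proof (shifted_lt x i j Hx Hi).
  assert (INR i < INR j) by (apply lt_INR; lia).
  apply Rdiv_lt_0_compat; lra.
Qed.

Lemma frobenius_ratio_pos x : nonincr x -> 0 < frobenius_ratio x.
Proof.
  intros Hx. apply Rdiv_lt_0_compat; [now apply vandermonde_shifted_pos|].
  apply prodR_pos. intros. now apply rising_pos.
Qed.

Definition removal_weight (x : list nat) (i : nat) : R :=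
  (INR (nth i x 0%nat) + INR (length x) - 1 - INR i)
  * lagrange_weight (length x) (shifted x) i.

Lemma frobenius_ratio_dec_row x i : nonincr x -> (i < length x)%nat ->
  (1 <= nth i x 0)%nat ->
  frobenius_ratio (dec_row x i) = frobenius_ratio x * removal_weight x i.
Proof.
  intros Hx Hi Hxi. unfold frobenius_ratio, removal_weight.
  rewrite length_dec_row by auto. set (k := length x) in *.
  rewrite (vandermonde_ext k (shifted (dec_row x i)) (decr_at (shifted x) i)).
  2:{ intros j Hj. unfold shifted, decr_at. rewrite nth_dec_row by auto.
      destruct (Nat.eq_dec j i) as [->|]; [|reflexivity].
      rewrite minus_INR by lia. simpl. ring. }
  rewrite vandermonde_decr_at by (auto; now apply shifted_distinct).
  rewrite (prodR_update k (fun j => rising k j (nth j x 0%nat))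
             (fun j => rising k j (nth j (dec_row x i) 0%nat)) i).
  - rewrite nth_dec_row by auto. destruct (Nat.eq_dec i i) as [_|]; [|lia].
    replace (nth i x 0%nat) with (S (nth i x 0 - 1))%nat at 2 by lia.
    rewrite rising_S.
    pose proof (rising_pos k i (nth i x 0 - 1)%nat Hi).
    assert (0 < prodR k (fun j => rising k j (nth j x 0%nat)))
      by (apply prodR_pos; intros; now apply rising_pos).
    assert (INR i < INR k) by (apply lt_INR; lia).
    assert (1 <= INR (nth i x 0%nat)) by (apply (le_INR 1); lia).
    rewrite minus_INR by lia. simpl (INR 1). field. repeat split; lra.
  - assumption.
  - apply Rgt_not_eq, rising_pos; auto.
  - intros t Ht Hti. rewrite nth_dec_row by auto. now destruct (Nat.eq_dec t i).
Qed.

Lemma sumR_removal_weight x : nonincr x -> sumR (length x) (removal_weight x) = INR (size x).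
Proof.
  intros Hx. unfold removal_weight. set (k := length x).
  assert (Hl : distinct_on k (shifted x)) by (now apply shifted_distinct).
  rewrite (sumR_ext k _ (fun i => shifted x i * lagrange_weight k (shifted x) i
                             + (INR k - 1) * lagrange_weight k (shifted x) i))
    by (intros; unfold shifted; ring).
  rewrite sumR_plus, sumR_scal, sumR_lagrange_weight_mul, sumR_lagrange_weight by auto.
  rewrite INR_size. fold k. unfold shifted.
  rewrite (sumR_ext k _ (fun i => INR (nth i x 0%nat) + (-1) * INR i)) by (intros; ring).
  rewrite sumR_plus, sumR_scal. change (sumR k (fun i => INR i)) with (sumR k INR).
  rewrite sumR_INR. field.
Qed.

(* Removing a box from a row equal to the next one: the factor [j = i+1] of the Lagrange
   weight vanishes, or, for the last row, the linear factor does. *)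
Lemma removal_weight_eq0 x i : (i < length x)%nat -> nth (S i) x 0%nat = nth i x 0%nat ->
  removal_weight x i = 0.
Proof.
  intros Hi Heq. unfold removal_weight. destruct (Nat.eq_dec (S i) (length x)) as [E|E].
  - rewrite (nth_overflow x) in Heq by lia. rewrite <- Heq, <- E, S_INR. simpl. ring.
  - unfold lagrange_weight. rewrite (prodR_eq0 _ _ (S i)); [ring | lia|].
    destruct (Nat.eq_dec (S i) i); [lia|]. unfold shifted. rewrite Heq, S_INR.
    unfold Rdiv. ring.
Qed.

Lemma skew_count_nil_frobenius d : forall x, nonincr x -> size x = d ->
  INR (skew_count d x []) = INR (fact d) * frobenius_ratio x.
Proof.
  induction d as [|d IH]; intros x Hx Hs.
  - assert (Hz := list_sum_eq0_nth x Hs). cbn [skew_count]. unfold frobenius_ratio.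
    rewrite (vandermonde_ext _ (shifted x) (fun j => - INR j))
      by (intros j _; unfold shifted; rewrite Hz; simpl; ring).
    rewrite vandermonde_opp_INR, (prodR_ext _ _ (fun _ => 1)) by (intros i _; now rewrite Hz).
    rewrite prodR_1. simpl. field.
  - cbn [skew_count]. rewrite INR_list_sum_map. change (sumL (seq 0 ?n) ?f) with (sumR n f).
    rewrite (sumR_ext _ _ (fun i => INR (fact d) * frobenius_ratio x * removal_weight x i)).
    { rewrite sumR_scal, sumR_removal_weight, Hs, fact_simpl, mult_INR by auto. ring. }
    intros i Hi. replace (nth i [] 0%nat) with 0%nat by now destruct i.
    destruct (Nat.ltb_spec (nth (S i) x 0%nat) (nth i x 0%nat));
      destruct (Nat.ltb_spec 0 (nth i x 0%nat)); simpl andb; cbv iota.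
    + rewrite IH, frobenius_ratio_dec_row by (auto using nonincr_dec_row; try lia;
        pose proof (size_dec_row x i Hi ltac:(lia)); lia).
      ring.
    + lia.
    + rewrite removal_weight_eq0 by (auto; specialize (Hx i); lia). simpl. ring.
    + rewrite removal_weight_eq0 by (auto; specialize (Hx i); lia). simpl. ring.
Qed.

Lemma INR_dim x : nonincr x -> INR (dim x) = INR (fact (size x)) * frobenius_ratio x.
Proof.
  intros Hx. unfold dim, dim_skew. cbn [containedb forallb seq length].
  rewrite Nat.sub_0_r. now apply skew_count_nil_frobenius.
Qed.

(** * Asymptotics of [Dim_N] *)

Lemma prodR_div n f g : (forall i, (i < n)%nat -> g i <> 0) ->
  prodR n (fun i => f i / g i) = prodR n f / prodR n g.
Proof.
  intros Hg. unfold Rdiv at 2. rewrite <- prodR_inv by auto. apply prodR_mult.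
Qed.

Lemma rising_shift_base v b :
  prodR v (fun s => b + 1 + INR s) * b = prodR v (fun s => b + INR s) * (b + INR v).
Proof.
  induction v as [|v IH]; [cbn; ring|].
  rewrite !prodR_S, S_INR.
  transitivity ((prodR v (fun s => b + 1 + INR s) * b) * (b + 1 + INR v)); [ring|].
  rewrite IH. ring.
Qed.

Lemma prodR_rising_telescope v a m : 0 < a ->
  prodR m (fun t => (INR v + a + INR t) / (a + INR t)) =
  prodR v (fun s => a + INR m + INR s) / prodR v (fun s => a + INR s).
Proof.
  intros Ha.
  assert (Hp : forall b, 0 < b -> 0 < prodR v (fun s => b + INR s))
    by (intros b Hb; apply prodR_pos; intros s _; pose proof (pos_INR s); lra).
  induction m as [|m IH].
  - change (prodR 0 ?f) with 1. simpl (INR 0). rewrite Rplus_0_r.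
    field. apply Rgt_not_eq, Hp, Ha.
  - rewrite prodR_S, IH, S_INR. pose proof (pos_INR m).
    assert (E := rising_shift_base v (a + INR m)).
    rewrite (prodR_ext v (fun s => a + (INR m + 1) + INR s)
               (fun s => a + INR m + 1 + INR s)) by (intros; ring).
    assert (0 < prodR v (fun s => a + INR s)) by (apply Hp; auto).
    assert (0 < prodR v (fun s => a + INR m + INR s)) by (apply Hp; lra).
    replace (prodR v (fun s => a + INR m + 1 + INR s)) with
      (prodR v (fun s => a + INR m + INR s) * (a + INR m + INR v) / (a + INR m))
      by (rewrite <- E; field; lra).
    field. lra.
Qed.

(* Padding [x] with zeros up to length [N]: the new factors of the Vandermonde product
   telescope row by row into rising factorials in [N]. *)
Lemma vandermonde_shifted_pad (x : list nat) N : (length x <= N)%nat ->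
  vandermonde N (shifted x) =
  frobenius_ratio x * prodR (length x) (fun i => prodR (nth i x 0%nat)
                                                  (fun s => INR N - INR i + INR s)).
Proof.
  intros HN. set (k := length x).
  assert (Hrising : forall i, (i < k)%nat -> rising k i (nth i x 0%nat) <> 0)
    by (intros; now apply Rgt_not_eq, rising_pos).
  unfold frobenius_ratio. fold k.
  replace N with (k + (N - k))%nat at 1 by lia.
  unfold vandermonde at 1. rewrite prodR_add. fold (vandermonde k (shifted x)).
  assert (0 < prodR k (fun i => rising k i (nth i x 0%nat)))
    by (apply prodR_pos; intros; now apply rising_pos).
  transitivity (vandermonde k (shifted x) * prodR k (fun i =>
     prodR (nth i x 0%nat) (fun s => INR N - INR i + INR s) / rising k i (nth i x 0%nat))).
  2:{ rewrite prodR_div by auto. field. lra. }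
  f_equal.
  rewrite (prodR_ext (N - k) _ (fun t => prodR k (fun i =>
     (INR (nth i x 0%nat) + (INR k - INR i) + INR t) / ((INR k - INR i) + INR t)))).
  2:{ intros t Ht. rewrite prodR_add.
      rewrite (prodR_ext t (fun s => _) (fun _ => 1)).
      2:{ intros s Hs. unfold shifted. rewrite !nth_overflow by (unfold k; lia).
          rewrite !plus_INR. assert (INR s < INR t) by (apply lt_INR; lia). field. lra. }
      rewrite prodR_1, Rmult_1_r. apply prodR_ext. intros i Hi. unfold shifted.
      rewrite (nth_overflow x (n := (k + t)%nat)) by (unfold k; lia). rewrite plus_INR.
      simpl (INR 0). f_equal; ring. }
  rewrite prodR_swap. apply prodR_ext. intros i Hi.
  assert (Ha : 0 < INR k - INR i) by (assert (INR i < INR k) by (apply lt_INR; lia); lra).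
  rewrite prodR_rising_telescope by auto. unfold rising. f_equal. apply prodR_ext.
  intros s _. rewrite minus_INR by (unfold k in *; lia). ring.
Qed.

Lemma nth_sig_of N x i :
  nth i (sig_of N x) 0%Z = if Nat.ltb i N then Z.of_nat (nth i x 0%nat) else 0%Z.
Proof.
  unfold sig_of. change 0%Z with (Z.of_nat 0). rewrite map_nth, nth_firstn.
  destruct (Nat.ltb i N); [|reflexivity]. f_equal.
  destruct (Nat.lt_ge_cases i (length x)).
  - now apply app_nth1.
  - rewrite app_nth2, (nth_overflow x (n := i)), nth_repeat by lia. reflexivity.
Qed.

Lemma DimN_sig_of N x : DimN N (sig_of N x) = vandermonde N (shifted x).
Proof.
  apply prodR_ext. intros j Hj. apply prodR_ext. intros i Hi.
  rewrite !nth_sig_of. destruct (Nat.ltb_spec i N), (Nat.ltb_spec j N); try lia.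
  rewrite minus_IZR, <- !INR_IZR_INZ. unfold shifted. f_equal. ring.
Qed.

Lemma DimN_sig_of_pos x N : nonincr x -> (length x <= N)%nat -> 0 < DimN N (sig_of N x).
Proof.
  intros Hx HN. rewrite DimN_sig_of, vandermonde_shifted_pad by auto.
  apply Rmult_lt_0_compat; [now apply frobenius_ratio_pos|].
  apply prodR_pos. intros i Hi. apply prodR_pos. intros s _.
  assert (INR i < INR N) by (apply lt_INR; lia). pose proof (pos_INR s). lra.
Qed.

Lemma pow_size y (x : list nat) : y ^ size x = prodR (length x) (fun i => y ^ nth i x 0%nat).
Proof.
  unfold size. induction x as [|a x IH]; [reflexivity|].
  simpl length. rewrite prodR_shift. simpl list_sum. now rewrite pow_add, IH.
Qed.

Lemma DimN_sig_of_asymptotics (x : list nat) : nonincr x ->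
  is_lim_seq (fun N => DimN N (sig_of N x) / INR N ^ size x) (frobenius_ratio x).
Proof.
  intros Hx. set (k := length x).
  apply is_lim_seq_ext_loc with (fun N => frobenius_ratio x *
     prodR k (fun i => prodR (nth i x 0%nat) (fun s => (INR N + (INR s - INR i)) / INR N))).
  - exists (S k). intros N HN.
    assert (HN0 : INR N <> 0) by (apply not_0_INR; lia).
    rewrite DimN_sig_of, vandermonde_shifted_pad, pow_size by (unfold k; lia). fold k.
    rewrite <- Rmult_div_assoc. f_equal.
    rewrite <- prodR_div by (intros; now apply pow_nonzero).
    apply prodR_ext. intros i _. rewrite prodR_div_pow by auto.
    apply prodR_ext. intros s _. f_equal. ring.
  - replace (Finite (frobenius_ratio x))
      with (Finite (frobenius_ratio x * prodR k (fun i => prodR (nth i x 0%nat) (fun _ => 1))))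
      by (rewrite (prodR_ext k _ (fun _ => 1)), prodR_1 by (intros; apply prodR_1);
          f_equal; ring).
    apply is_lim_seq_mult'; [apply is_lim_seq_const|].
    apply is_lim_seq_prodR. intros i _. apply is_lim_seq_prodR. intros s _.
    apply is_lim_seq_shift_ratio.
Qed.

(** * Interlacing chains of padded Young diagrams *)

Definition nat_range (b a : nat) : list nat := map (Nat.add b) (seq 0 (S a - b)).

(* The nat-valued counterpart of [interl]: the [y] with [x_(i+1) <= y_i <= x_i]. *)
Fixpoint interl_nat (x : list nat) : list (list nat) :=
  match x with
  | [] => [[]]
  | a :: rest =>
      flat_map (fun y => map (cons y) (interl_nat rest)) (nat_range (hd 0%nat rest) a)
  end.

Fixpoint chains_nat (t : list nat) (d : nat) (x : list nat) : nat :=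
  match d with
  | O => if list_eq_dec Nat.eq_dec x t then 1 else 0
  | S d' => list_sum (map (chains_nat t d') (interl_nat x))
  end.

Lemma in_nat_range y b a : In y (nat_range b a) <-> (b <= y <= a)%nat.
Proof.
  unfold nat_range. rewrite in_map_iff. split.
  - intros [t [<- Ht]]. apply in_seq in Ht. lia.
  - intros H. exists (y - b)%nat. split; [lia|]. apply in_seq. lia.
Qed.

Lemma Zrange_of_nat b a : Zrange (Z.of_nat b) (Z.of_nat a) = map Z.of_nat (nat_range b a).
Proof.
  unfold Zrange, nat_range. rewrite map_map.
  replace (Z.to_nat (Z.of_nat a - Z.of_nat b + 1)) with (S a - b)%nat by lia.
  apply map_ext. intros t. lia.
Qed.

Lemma flat_map_map {A B C} (g : B -> list C) (h : A -> B) (l : list A) :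
  flat_map g (map h l) = flat_map (fun a => g (h a)) l.
Proof. induction l as [|a l IH]; simpl; [reflexivity|]. now rewrite IH. Qed.

Lemma map_flat_map {A B C} (f : B -> C) (G : A -> list B) (l : list A) :
  map f (flat_map G l) = flat_map (fun a => map f (G a)) l.
Proof. induction l as [|a l IH]; simpl; [reflexivity|]. now rewrite map_app, IH. Qed.

Lemma interl_zeros m : interl (map Z.of_nat (repeat 0%nat (S m))) = [map Z.of_nat (repeat 0%nat m)].
Proof.
  induction m as [|m IH]; [reflexivity|].
  change (flat_map (fun y => map (cons y) (interl (map Z.of_nat (repeat 0%nat (S m)))))
            (Zrange 0 0) = [map Z.of_nat (repeat 0%nat (S m))]).
  now rewrite IH.
Qed.

Lemma interl_cons a b L :
  interl (a :: b :: L) = flat_map (fun y => map (cons y) (interl (b :: L))) (Zrange b a).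
Proof. reflexivity. Qed.

Lemma interl_of_nat_pad x m : interl (map Z.of_nat (x ++ repeat 0%nat (S m))) =
  map (fun y => map Z.of_nat (y ++ repeat 0%nat m)) (interl_nat x).
Proof.
  induction x as [|a rest IH]; [exact (interl_zeros m)|].
  assert (Hhd : map Z.of_nat (rest ++ repeat 0%nat (S m)) =
                Z.of_nat (hd 0%nat rest) :: tl (map Z.of_nat (rest ++ repeat 0%nat (S m))))
    by (destruct rest; reflexivity).
  change (map Z.of_nat ((a :: rest) ++ repeat 0%nat (S m))) with
    (Z.of_nat a :: map Z.of_nat (rest ++ repeat 0%nat (S m))).
  rewrite Hhd, interl_cons, <- Hhd, IH, Zrange_of_nat. cbn [interl_nat].
  rewrite map_flat_map, flat_map_map. apply flat_map_ext. intros y. now rewrite !map_map.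
Qed.

Lemma interl_nat_spec x y : In y (interl_nat x) ->
  length y = length x /\ forall i, (nth (S i) x 0 <= nth i y 0 <= nth i x 0)%nat.
Proof.
  revert y. induction x as [|a rest IH]; intros y Hy.
  - destruct Hy as [<-|[]]. split; [reflexivity|]. intros [|i]; simpl; lia.
  - apply in_flat_map in Hy. destruct Hy as [b [Hb Hy]]. apply in_nat_range in Hb.
    apply in_map_iff in Hy. destruct Hy as [y' [<- Hy']]. destruct (IH y' Hy') as [Hl Hi].
    split; [simpl; now f_equal|]. intros [|i]; [destruct rest; simpl in *; lia | apply Hi].
Qed.

Lemma interl_nat_length x y : In y (interl_nat x) -> length y = length x.
Proof. intros Hy. apply (interl_nat_spec x y Hy). Qed.

Lemma interl_nat_bounds x y : In y (interl_nat x) ->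
  forall i, (nth (S i) x 0 <= nth i y 0 <= nth i x 0)%nat.
Proof. intros Hy. apply (interl_nat_spec x y Hy). Qed.

Lemma interl_nat_nonincr x y : In y (interl_nat x) -> nonincr y.
Proof.
  intros Hy i. pose proof (interl_nat_bounds x y Hy i).
  pose proof (interl_nat_bounds x y Hy (S i)). lia.
Qed.

Lemma interl_nat_size x y : In y (interl_nat x) -> (size y <= size x)%nat.
Proof.
  revert y. induction x as [|a rest IH]; intros y Hy.
  - destruct Hy as [<-|[]]. reflexivity.
  - apply in_flat_map in Hy. destruct Hy as [b [Hb Hy]]. apply in_nat_range in Hb.
    apply in_map_iff in Hy. destruct Hy as [y' [<- Hy']].
    specialize (IH y' Hy'). unfold size in *. simpl. lia.
Qed.

Lemma firstn_repeat_le {A} (a : A) n m : (n <= m)%nat -> firstn n (repeat a m) = repeat a n.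
Proof.
  revert m. induction n as [|n IH]; intros [|m] H; try lia; [reflexivity..|].
  simpl. f_equal. apply IH. lia.
Qed.

Lemma sig_of_pad N x : (length x <= N)%nat ->
  sig_of N x = map Z.of_nat (x ++ repeat 0%nat (N - length x)).
Proof.
  intros H. unfold sig_of. rewrite firstn_app, firstn_all2 by auto.
  do 3 f_equal. apply firstn_repeat_le. lia.
Qed.

Lemma map_of_nat_inj l1 l2 : map Z.of_nat l1 = map Z.of_nat l2 -> l1 = l2.
Proof.
  revert l2. induction l1 as [|a l1 IH]; intros [|b l2] H; try discriminate; [reflexivity|].
  injection H as H1 H2. f_equal; [lia | auto].
Qed.

Definition pad_zeros (K : nat) (x : list nat) : list nat := x ++ repeat 0%nat (K - length x).

Lemma nth_pad_zeros K x i : nth i (pad_zeros K x) 0%nat = nth i x 0%nat.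
Proof.
  unfold pad_zeros. destruct (Nat.lt_ge_cases i (length x)).
  - now apply app_nth1.
  - rewrite app_nth2, nth_repeat, (nth_overflow x (n := i)) by lia. reflexivity.
Qed.

Lemma length_pad_zeros K x : (length x <= K)%nat -> length (pad_zeros K x) = K.
Proof. intros H. unfold pad_zeros. rewrite length_app, repeat_length. lia. Qed.

Lemma size_pad_zeros K x : size (pad_zeros K x) = size x.
Proof.
  unfold pad_zeros, size. rewrite list_sum_app.
  enough (list_sum (repeat 0%nat (K - length x)) = 0%nat) by lia.
  induction (K - length x)%nat; simpl; auto.
Qed.

(* Padding with zeros turns chains of signatures into chains of diagrams of a fixed length
   [K]. *)
Lemma chains_count_sig_of (mu : list nat) K : (length mu <= K)%nat ->
  forall d x N, length x = K -> (K <= N)%nat ->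
  chains_count (sig_of N mu) d (sig_of (N + d) x)
  = chains_nat (pad_zeros K mu) d x.
Proof.
  intros Hmu. set (t := pad_zeros K mu).
  assert (Ht : length t = K) by now apply length_pad_zeros.
  intros d. induction d as [|d IH]; intros x N Hx HN.
  - rewrite Nat.add_0_r.
    assert (Hmu_pad : sig_of N mu = map Z.of_nat (t ++ repeat 0%nat (N - K))).
    { rewrite sig_of_pad by lia. unfold t, pad_zeros. rewrite <- app_assoc, <- repeat_app.
      do 3 f_equal. lia. }
    rewrite Hmu_pad, (sig_of_pad N x), Hx by lia. simpl.
    destruct (list_eq_dec Z.eq_dec _ _) as [E|E], (list_eq_dec Nat.eq_dec x t) as [E'|E'];
      auto.
    + apply map_of_nat_inj, app_inv_tail in E. congruence.
    + exfalso. apply E. congruence.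
  - cbn [chains_count chains_nat].
    rewrite (sig_of_pad (N + S d) x) by lia.
    replace (N + S d - length x)%nat with (S (N + d - K)) by lia.
    rewrite interl_of_nat_pad, map_map. f_equal. apply map_ext_in. intros y Hy.
    pose proof (interl_nat_length x y Hy) as Hly.
    rewrite <- (IH y N) by lia. f_equal. rewrite sig_of_pad by lia. now rewrite Hly, Hx.
Qed.

Lemma containedb_spec mu x : containedb mu x = true <-> contained mu x.
Proof.
  unfold containedb, contained. rewrite forallb_forall. split.
  - intros H i. destruct (Nat.lt_ge_cases i (length mu)).
    + apply Nat.leb_le, H, in_seq. lia.
    + rewrite (nth_overflow mu (n := i)) by lia. lia.
  - intros H i _. apply Nat.leb_le, H.
Qed.

Lemma contained_size u v : contained u v ->
  (size u <= size v)%nat /\ (size u = size v -> forall i, nth i u 0%nat = nth i v 0%nat).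
Proof.
  revert v. induction u as [|a u IH]; intros v Huv.
  - split; [unfold size; simpl; lia|]. intros Hs i.
    rewrite (list_sum_eq0_nth v) by (unfold size in Hs; simpl in Hs; lia). now destruct i.
  - assert (Hv : size v = (nth 0 v 0 + size (tl v))%nat) by (now destruct v).
    assert (Hnth : forall i, nth (S i) v 0%nat = nth i (tl v) 0%nat) by (now destruct v, i).
    destruct (IH (tl v)) as [Hle Heq]; [intros i; rewrite <- Hnth; apply (Huv (S i))|].
    specialize (Huv 0%nat). unfold size in *. simpl in *.
    split; [lia|]. intros Hs [|i]; simpl; [lia|]. rewrite Hnth. apply Heq. lia.
Qed.

Lemma nonincr_tl a rest : nonincr (a :: rest) -> nonincr rest.
Proof. intros H i. apply (H (S i)). Qed.

Lemma nonincr_hd a rest : nonincr (a :: rest) -> (hd 0 rest <= a)%nat.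
Proof. intros H. specialize (H 0%nat). destruct rest; simpl in *; lia. Qed.

Lemma nat_range_last b a : (b <= a)%nat ->
  nat_range b a = map (Nat.add b) (seq 0 (a - b)) ++ [a].
Proof.
  intros H. unfold nat_range. replace (S a - b)%nat with (S (a - b)) by lia.
  rewrite seq_S, map_app. simpl. do 3 f_equal. lia.
Qed.

Ltac destruct_eq_dec :=
  repeat match goal with |- context [Nat.eq_dec ?p ?q] => destruct (Nat.eq_dec p q) end.

(* Only [x] itself among its interlacing diagrams has the same size. *)
Lemma sumL_interl_nat_eq_size x : nonincr x -> forall F,
  sumL (interl_nat x) (fun y => if Nat.eq_dec (size y) (size x) then F y else 0) = F x.
Proof.
  induction x as [|a rest IH]; intros Hx F; [cbn; destruct (Nat.eq_dec 0 0); [ring|lia]|].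
  cbn [interl_nat]. rewrite sumL_flat_map, nat_range_last by now apply nonincr_hd.
  rewrite sumL_app, sumL_eq0.
  2:{ intros b Hb. apply in_map_iff in Hb. destruct Hb as [c [<- Hc]]. apply in_seq in Hc.
      rewrite sumL_map. apply sumL_eq0. intros y Hy.
      destruct (Nat.eq_dec _ _) as [E|]; [|reflexivity].
      pose proof (interl_nat_size _ _ Hy). rewrite !size_cons in E. lia. }
  cbn [sumL map fold_right]. rewrite sumL_map.
  rewrite (sumL_ext_in _ _ (fun y => if Nat.eq_dec (size y) (size rest) then F (a :: y) else 0)).
  2:{ intros y _. rewrite !size_cons.
      destruct_eq_dec; try lia; reflexivity. }
  rewrite (IH (nonincr_tl _ _ Hx) (fun y => F (a :: y))). ring.
Qed.

(* The interlacing diagrams with one box less are exactly the [dec_row x i] at the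
   corners [x_(i+1) < x_i]. *)
Lemma sumL_interl_nat_remove_box x : nonincr x -> forall F,
  sumL (interl_nat x) (fun y => if Nat.eq_dec (S (size y)) (size x) then F y else 0) =
  sumR (length x) (fun i =>
    if Nat.ltb (nth (S i) x 0%nat) (nth i x 0%nat) then F (dec_row x i) else 0).
Proof.
  induction x as [|a rest IH]; intros Hx F; [cbn; destruct (Nat.eq_dec 1 0); [lia|ring]|].
  simpl length. rewrite sumR_shift.
  change (fun i => if Nat.ltb (nth (S (S i)) (a :: rest) 0%nat) (nth (S i) (a :: rest) 0%nat)
                   then F (dec_row (a :: rest) (S i)) else 0)
    with (fun i => if Nat.ltb (nth (S i) rest 0%nat) (nth i rest 0%nat)
                   then F (a :: dec_row rest i) else 0).
  rewrite <- (IH (nonincr_tl _ _ Hx) (fun y => F (a :: y))).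
  assert (Hb := nonincr_hd _ _ Hx).
  change (nth 1 (a :: rest) 0%nat) with (nth 0 rest 0%nat).
  replace (nth 0 rest 0%nat) with (hd 0%nat rest) by (now destruct rest).
  change (dec_row (a :: rest) 0) with ((a - 1)%nat :: rest). cbn [nth].
  cbn [interl_nat]. rewrite sumL_flat_map.
  assert (Hkeep : sumL (map (cons a) (interl_nat rest))
       (fun y => if Nat.eq_dec (S (size y)) (size (a :: rest)) then F y else 0) =
       sumL (interl_nat rest)
         (fun y => if Nat.eq_dec (S (size y)) (size rest) then F (a :: y) else 0)).
  { rewrite sumL_map. apply sumL_ext_in. intros y _. rewrite !size_cons.
    destruct_eq_dec; try lia; reflexivity. }
  destruct (Nat.ltb_spec (hd 0%nat rest) a) as [Hlt|Hge].
  - replace (nat_range (hd 0%nat rest) a) with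
      (map (Nat.add (hd 0%nat rest)) (seq 0 (a - 1 - hd 0%nat rest)) ++ [(a - 1)%nat; a]).
    2:{ unfold nat_range. replace (S a - hd 0%nat rest)%nat with
          ((a - 1 - hd 0%nat rest) + 2)%nat by lia.
        rewrite seq_app, map_app. f_equal. simpl. f_equal; [lia|]. f_equal. lia. }
    rewrite sumL_app, sumL_eq0.
    2:{ intros b Hb'. apply in_map_iff in Hb'. destruct Hb' as [c [<- Hc]]. apply in_seq in Hc.
        rewrite sumL_map. apply sumL_eq0. intros y Hy.
        destruct (Nat.eq_dec _ _) as [E|]; [|reflexivity].
        pose proof (interl_nat_size _ _ Hy). rewrite !size_cons in E. lia. }
    cbn [sumL map fold_right]. fold (sumL (map (cons a) (interl_nat rest))
       (fun y => if Nat.eq_dec (S (size y)) (size (a :: rest)) then F y else 0)).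
    rewrite Hkeep, sumL_map.
    rewrite (sumL_ext_in _ _ (fun y => if Nat.eq_dec (size y) (size rest)
                                         then F ((a - 1)%nat :: y) else 0)).
    2:{ intros y _. rewrite !size_cons.
        destruct_eq_dec; try lia; reflexivity. }
    rewrite (sumL_interl_nat_eq_size rest (nonincr_tl _ _ Hx)). ring.
  - replace (nat_range (hd 0%nat rest) a) with [a].
    2:{ unfold nat_range. replace (S a - hd 0%nat rest)%nat with 1%nat by lia.
        simpl. f_equal. lia. }
    cbn [sumL map fold_right]. fold (sumL (map (cons a) (interl_nat rest))
       (fun y => if Nat.eq_dec (S (size y)) (size (a :: rest)) then F y else 0)).
    rewrite Hkeep. ring.
Qed.

Lemma dim_skew_not_contained x mu : ~ contained mu x -> dim_skew x mu = 0%nat.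
Proof.
  intros H. unfold dim_skew. destruct (containedb mu x) eqn:E; [|reflexivity].
  exfalso. now apply H, containedb_spec.
Qed.

Lemma contained_dec_row mu x i : (i < length x)%nat -> (0 < nth i x 0)%nat ->
  contained mu x -> contained mu (dec_row x i) <-> (nth i mu 0 < nth i x 0)%nat.
Proof.
  intros Hi Hx Hc. split.
  - intros Hd. specialize (Hd i). rewrite nth_dec_row in Hd by auto.
    destruct (Nat.eq_dec i i); lia.
  - intros Hlt j. rewrite nth_dec_row by auto.
    destruct (Nat.eq_dec j i) as [->|]; [lia | apply Hc].
Qed.

Lemma dim_skew_branching mu x e : nonincr x -> contained mu x ->
  size x = (S e + size mu)%nat ->
  INR (dim_skew x mu) = sumR (length x) (fun i =>
    if Nat.ltb (nth (S i) x 0%nat) (nth i x 0%nat) then INR (dim_skew (dec_row x i) mu) else 0).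
Proof.
  intros Hx Hc Hs. unfold dim_skew at 1.
  rewrite (proj2 (containedb_spec mu x) Hc), Hs, Nat.add_sub. cbn [skew_count].
  rewrite INR_list_sum_map. change (sumL (seq 0 ?n) ?f) with (sumR n f).
  apply sumR_ext. intros i Hi.
  destruct (Nat.ltb_spec (nth (S i) x 0%nat) (nth i x 0%nat)); [|reflexivity].
  destruct (Nat.ltb_spec (nth i mu 0%nat) (nth i x 0%nat)) as [Hlt|Hge]; simpl andb.
  - unfold dim_skew. rewrite (proj2 (containedb_spec _ _)) by (apply contained_dec_row; auto; lia).
    f_equal. f_equal. pose proof (size_dec_row x i Hi ltac:(lia)). lia.
  - rewrite dim_skew_not_contained; [reflexivity|].
    rewrite contained_dec_row by (auto; lia). lia.
Qed.

Lemma nonincr_pad_zeros K x : nonincr x -> nonincr (pad_zeros K x).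
Proof. intros Hx i. rewrite !nth_pad_zeros. apply Hx. Qed.

Lemma list_sum_map_eq0 {A} (g : A -> nat) (l : list A) :
  (forall a, In a l -> g a = 0%nat) -> list_sum (map g l) = 0%nat.
Proof.
  induction l as [|a l IH]; intros H; [reflexivity|].
  simpl. rewrite H by now left. rewrite IH by (intros; apply H; now right). reflexivity.
Qed.

Section ChainAsymptotics.

Variables (mu : list nat) (K : nat).
Hypothesis Hmu : nonincr mu.
Hypothesis HmuK : (length mu <= K)%nat.

Let t := pad_zeros K mu.

Lemma chains_nat_not_contained d x : ~ contained mu x -> chains_nat t d x = 0%nat.
Proof.
  revert x. induction d as [|d IH]; intros x Hx; simpl.
  - destruct (list_eq_dec Nat.eq_dec x t) as [->|]; [|reflexivity].
    exfalso. apply Hx. intros i. unfold t. rewrite nth_pad_zeros. lia.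
  - apply list_sum_map_eq0. intros y Hy. apply IH. intros Hc. apply Hx. intros i.
    specialize (Hc i). pose proof (interl_nat_bounds x y Hy i). lia.
Qed.

Lemma chains_nat_diag d : chains_nat t d t = 1%nat.
Proof.
  induction d as [|d IH]; simpl.
  - now destruct (list_eq_dec Nat.eq_dec t t).
  - apply INR_eq. rewrite INR_list_sum_map.
    rewrite (sumL_ext_in _ _ (fun y => if Nat.eq_dec (size y) (size t)
                                       then INR (chains_nat t d y) else 0)).
    { rewrite sumL_interl_nat_eq_size, IH by (apply nonincr_pad_zeros, Hmu). reflexivity. }
    intros y Hy. destruct (Nat.eq_dec (size y) (size t)); [reflexivity|].
    rewrite chains_nat_not_contained; [reflexivity|]. intros Hc.
    pose proof (interl_nat_size _ _ Hy). pose proof (proj1 (contained_size _ _ Hc)).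
    unfold t in *. rewrite size_pad_zeros in *. lia.
Qed.

Lemma chains_nat_S d x : nonincr x ->
  INR (chains_nat t (S d) x) = INR (chains_nat t d x)
    + sumL (interl_nat x)
        (fun y => if Nat.ltb (size y) (size x) then INR (chains_nat t d y) else 0).
Proof.
  intros Hx. cbn [chains_nat]. rewrite INR_list_sum_map.
  rewrite (sumL_ext_in _ _ (fun y =>
     (if Nat.eq_dec (size y) (size x) then INR (chains_nat t d y) else 0)
     + (if Nat.ltb (size y) (size x) then INR (chains_nat t d y) else 0))).
  { now rewrite sumL_plus, sumL_interl_nat_eq_size. }
  intros y Hy. pose proof (interl_nat_size _ _ Hy).
  destruct (Nat.eq_dec _ _), (Nat.ltb_spec (size y) (size x)); try lia; ring.
Qed.

Definition skew_density (x : list nat) : R :=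
  INR (dim_skew x mu) / INR (fact (size x - size mu)).

Lemma is_lim_seq_chains_nat_term x y e :
  In y (interl_nat x) -> size x = (S e + size mu)%nat ->
  ((size y < size x)%nat ->
     is_lim_seq (fun d => INR (chains_nat t d y) / INR d ^ (size y - size mu)) (skew_density y)) ->
  is_lim_seq
    (fun d => (if Nat.ltb (size y) (size x) then INR (chains_nat t d y) else 0) / INR d ^ e)
    (Finite (if Nat.eq_dec (S (size y)) (size x) then skew_density y else 0)).
Proof.
  intros Hy Hx IH. pose proof (interl_nat_size _ _ Hy).
  destruct (containedb mu y) eqn:Hcb.
  2:{ assert (Hc : ~ contained mu y) by (rewrite <- containedb_spec; congruence).
      assert (Hd : skew_density y = 0).
      { unfold skew_density. rewrite dim_skew_not_contained by auto. simpl. unfold Rdiv. ring. }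
      apply is_lim_seq_ext with (fun _ => 0).
      { intros d. rewrite chains_nat_not_contained by auto.
        destruct (Nat.ltb (size y) (size x)); simpl; unfold Rdiv; ring. }
      destruct (Nat.eq_dec (S (size y)) (size x)); rewrite ?Hd; apply is_lim_seq_const. }
  apply containedb_spec in Hcb. pose proof (proj1 (contained_size _ _ Hcb)).
  destruct (Nat.eq_dec (S (size y)) (size x)) as [E|E].
  - replace e with (size y - size mu)%nat by lia.
    apply (is_lim_seq_ext (fun d => INR (chains_nat t d y) / INR d ^ (size y - size mu))).
    { intros d. destruct (Nat.ltb_spec (size y) (size x)); [reflexivity | lia]. }
    apply IH. lia.
  - destruct (Nat.ltb_spec (size y) (size x)).
    + apply (is_lim_seq_div_pow_gt _ (size y - size mu) e (skew_density y)); [lia|].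
      now apply IH.
    + apply is_lim_seq_ext with (fun _ => 0); [|apply is_lim_seq_const].
      intros d. unfold Rdiv. ring.
Qed.

Lemma sumL_interl_nat_skew_density x e : nonincr x -> contained mu x ->
  size x = (S e + size mu)%nat ->
  sumL (interl_nat x) (fun y => if Nat.eq_dec (S (size y)) (size x) then skew_density y else 0)
  = INR (S e) * skew_density x.
Proof.
  intros Hx Hc Hs.
  rewrite (sumL_ext_in _ _ (fun y => if Nat.eq_dec (S (size y)) (size x)
                                     then INR (dim_skew y mu) / INR (fact e) else 0)).
  2:{ intros y _. destruct (Nat.eq_dec _ _); [|reflexivity].
      unfold skew_density. do 3 f_equal. lia. }
  rewrite sumL_interl_nat_remove_box by auto.
  rewrite (sumR_ext _ _ (fun i => / INR (fact e) * (if Nat.ltb (nth (S i) x 0%nat) (nth i x 0%nat)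
                                   then INR (dim_skew (dec_row x i) mu) else 0)))
    by (intros; destruct (Nat.ltb _ _); unfold Rdiv; ring).
  rewrite sumR_scal, <- dim_skew_branching with (e := e) by auto.
  unfold skew_density. rewrite Hs, Nat.add_sub, fact_simpl, mult_INR.
  field. split; apply not_0_INR; [apply fact_neq_0 | lia].
Qed.

Theorem is_lim_seq_chains_nat x : length x = K -> nonincr x ->
  is_lim_seq (fun d => INR (chains_nat t d x) / INR d ^ (size x - size mu)) (skew_density x).
Proof.
  remember (size x) as n eqn:Hn. revert x Hn.
  induction n as [n IH] using lt_wf_ind. intros x Hn Hlen Hx. subst n.
  destruct (containedb mu x) eqn:Hcb.
  2:{ assert (Hc : ~ contained mu x) by (rewrite <- containedb_spec; congruence).
      unfold skew_density. rewrite dim_skew_not_contained by auto.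
      apply is_lim_seq_ext with (fun _ => 0).
      - intros d. rewrite chains_nat_not_contained by auto. simpl. unfold Rdiv. ring.
      - replace (INR 0 / _) with 0 by (simpl; unfold Rdiv; ring). apply is_lim_seq_const. }
  apply containedb_spec in Hcb. destruct (contained_size _ _ Hcb) as [Hle Heq].
  destruct (size x - size mu)%nat as [|e] eqn:He.
  - assert (Hxt : x = t).
    { apply nth_ext with 0%nat 0%nat; [unfold t; rewrite length_pad_zeros; auto|].
      intros i _. unfold t. rewrite nth_pad_zeros. symmetry. apply Heq. lia. }
    subst x. assert (Hd : skew_density t = 1).
    { unfold skew_density, dim_skew. rewrite (proj2 (containedb_spec _ _) Hcb), He.
      cbn [skew_count]. rewrite (proj2 (containedb_spec _ _) Hcb). simpl. field. }
    rewrite Hd. apply is_lim_seq_ext with (fun _ => 1); [|apply is_lim_seq_const].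
    intros d. rewrite chains_nat_diag. simpl. field.
  - replace (skew_density x) with ((INR (S e) * skew_density x) / INR (S e))
      by (field; apply not_0_INR; lia).
    apply stolz_cesaro_pow with (s := fun d => sumL (interl_nat x)
       (fun y => if Nat.ltb (size y) (size x) then INR (chains_nat t d y) else 0)).
    { intros d. now apply chains_nat_S. }
    rewrite <- sumL_interl_nat_skew_density by (auto; lia).
    apply (is_lim_seq_ext (fun d => sumL (interl_nat x) (fun y =>
       (if Nat.ltb (size y) (size x) then INR (chains_nat t d y) else 0) / INR d ^ e))).
    { intros d. apply sumL_div. }
    apply is_lim_seq_sumL. intros y Hy.
    apply is_lim_seq_chains_nat_term; [auto | lia |]. intros Hlt.
    apply (IH (size y)); auto.
    + now rewrite (interl_nat_length x y Hy).
    + now apply (interl_nat_nonincr x).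
Qed.

End ChainAsymptotics.

(** * Proportional sequences of integers *)

Lemma filterlim_nat_of_unbounded (s : nat -> nat) :
  (forall M, exists k0, forall k, (k0 <= k)%nat -> (M <= s k)%nat) ->
  filterlim s eventually eventually.
Proof.
  intros H P [M HM]. destruct (H M) as [k0 Hk0]. exists k0. intros k Hk. now apply HM, Hk0.
Qed.

Lemma filterlim_nat_of_INR (s : nat -> nat) :
  is_lim_seq (fun k => INR (s k)) p_infty -> filterlim s eventually eventually.
Proof.
  intros H. apply filterlim_nat_of_unbounded. intros M.
  destruct (proj1 (is_lim_seq_p_infty_Reals _) H (INR M)) as [k0 Hk0].
  exists k0. intros k Hk. apply Nat.lt_le_incl, INR_lt, Hk0, Hk.
Qed.

Section ProportionalSequences.

Variables (N N' : nat -> nat) (q : R).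
Hypothesis HN : filterlim N eventually eventually.
Hypothesis HNN' : forall k, (N k < N' k)%nat.
Hypothesis Hq : is_lim_seq (fun k => INR (N' k) / INR (N k)) q.

Lemma eventually_pos : exists k0, forall k, (k0 <= k)%nat -> (0 < N k)%nat.
Proof. apply (HN (fun n => 0 < n)%nat). now exists 1%nat. Qed.

Lemma is_lim_seq_ratio_inv : q <> 0 -> is_lim_seq (fun k => INR (N k) / INR (N' k)) (/ q).
Proof.
  intros Hq0. apply is_lim_seq_ext_loc with (fun k => / (INR (N' k) / INR (N k))).
  - destruct eventually_pos as [k0 Hk0]. exists k0. intros k Hk.
    specialize (Hk0 k Hk). specialize (HNN' k).
    assert (INR (N k) <> 0) by (apply not_0_INR; lia).
    assert (INR (N' k) <> 0) by (apply not_0_INR; lia).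
    field. auto.
  - apply (is_lim_seq_inv _ q); [exact Hq | now injection 1].
Qed.

Lemma is_lim_seq_gap_ratio : q <> 0 ->
  is_lim_seq (fun k => INR (N' k - N k) / INR (N' k)) (1 - / q).
Proof.
  intros Hq0. apply is_lim_seq_ext with (fun k => 1 - INR (N k) / INR (N' k)).
  - intros k. specialize (HNN' k). rewrite minus_INR by lia.
    field. apply not_0_INR. lia.
  - apply is_lim_seq_minus'; [apply is_lim_seq_const | now apply is_lim_seq_ratio_inv].
Qed.

Lemma filterlim_gap : 1 < q -> filterlim (fun k => (N' k - N k)%nat) eventually eventually.
Proof.
  intros Hq1. apply filterlim_nat_of_INR.
  apply is_lim_seq_ext_loc with (fun k => INR (N k) * (INR (N' k) / INR (N k) - 1)).
  - destruct eventually_pos as [k0 Hk0]. exists k0. intros k Hk.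
    specialize (Hk0 k Hk). specialize (HNN' k). rewrite minus_INR by lia.
    field. apply not_0_INR. lia.
  - apply is_lim_seq_mult with p_infty (q - 1).
    + exact (is_lim_seq_subseq _ _ _ HN is_lim_seq_INR).
    + apply is_lim_seq_minus'; [exact Hq | apply is_lim_seq_const].
    + apply is_Rbar_mult_p_infty_pos. simpl. lra.
Qed.

End ProportionalSequences.

(** * The limit of the Gelfand–Tsetlin link *)

Lemma young_contained_length mu lam : young mu -> contained mu lam ->
  (length mu <= length lam)%nat.
Proof.
  intros [_ Hpos] Hc. destruct (Nat.le_gt_cases (length mu) (length lam)) as [|H]; auto.
  specialize (Hpos (length lam) H). specialize (Hc (length lam)).
  rewrite (nth_overflow lam (n := length lam)) in Hc by lia. lia.
Qed.

Lemma GT_link_sig_of_factor lam mu N N' : nonincr lam -> contained mu lam ->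
  (length mu <= length lam)%nat -> (length lam <= N)%nat -> (0 < N < N')%nat ->
  GT_link N' N (sig_of N' lam) (sig_of N mu) =
  DimN N (sig_of N mu) / INR N ^ size mu
  * (INR (chains_nat (pad_zeros (length lam) mu) (N' - N) lam)
     / INR (N' - N) ^ (size lam - size mu))
  / (DimN N' (sig_of N' lam) / INR N' ^ size lam)
  * (INR N / INR N') ^ size mu * (INR (N' - N) / INR N') ^ (size lam - size mu).
Proof.
  intros Hlam Hc HmuK HN HNN'. set (d := (size lam - size mu)%nat).
  unfold GT_link, DimKN.
  replace N' with (N + (N' - N))%nat at 2 by lia.
  rewrite (chains_count_sig_of mu (length lam) HmuK (N' - N) lam N eq_refl HN).
  assert (HN0 : INR N <> 0) by (apply not_0_INR; lia).
  assert (HN'0 : INR N' <> 0) by (apply not_0_INR; lia).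
  assert (HM0 : INR (N' - N) <> 0) by (apply not_0_INR; lia).
  pose proof (DimN_sig_of_pos lam N' Hlam ltac:(lia)).
  replace (size lam) with (size mu + d)%nat
    by (unfold d; pose proof (proj1 (contained_size _ _ Hc)); lia).
  unfold Rdiv. rewrite pow_add, !Rpow_mult_distr, !pow_inv.
  field. repeat split; try lra; now apply pow_nonzero.
Qed.

Lemma YB_link_frobenius r' r lam mu : nonincr lam -> nonincr mu -> contained mu lam ->
  YB_link r' r lam mu = frobenius_ratio mu * skew_density mu lam / frobenius_ratio lam
                        * (r / r') ^ size mu * (1 - r / r') ^ (size lam - size mu).
Proof.
  intros Hlam Hmu Hc. unfold YB_link, skew_density.
  rewrite (proj2 (containedb_spec _ _) Hc), !INR_dim by auto. unfold Binomial.C.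
  pose proof (proj1 (contained_size _ _ Hc)).
  set (d := (size lam - size mu)%nat). set (q := r / r').
  replace (size lam) with (size mu + d)%nat by (unfold d; lia).
  replace (size mu + d - size mu)%nat with d by lia.
  pose proof (frobenius_ratio_pos lam Hlam).
  assert (forall n, INR (fact n) <> 0) by (intros; apply not_0_INR, fact_neq_0).
  field. repeat split; auto; lra.
Qed.

Theorem theorem7 (r r' : R) (lam mu : list nat)
  (hr : 0 < r) (hrr : r < r')
  (hlam : young lam) (hmu : young mu) (hsub : contained mu lam)
  (Nk N'k : nat -> nat)
  (hlt : forall k, (Nk k < N'k k)%nat)
  (hinf : forall M : nat, exists k0 : nat, forall k, (k0 <= k)%nat -> (M <= Nk k)%nat)
  (hratio : Un_cv (fun k => INR (N'k k) / INR (Nk k)) (r' / r)) :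
  Un_cv (fun k => GT_link (N'k k) (Nk k) (sig_of (N'k k) lam) (sig_of (Nk k) mu))
        (YB_link r' r lam mu).
Proof.
  pose proof (young_nonincr _ hlam) as Hlam. pose proof (young_nonincr _ hmu) as Hmu.
  pose proof (young_contained_length _ _ hmu hsub) as HmuK.
  apply is_lim_seq_Reals in hratio.
  assert (Hq : 1 < r' / r) by (apply Rlt_div_r; lra).
  assert (HN := filterlim_nat_of_unbounded _ hinf).
  assert (HN' : filterlim N'k eventually eventually).
  { apply filterlim_nat_of_unbounded. intros M. destruct (hinf M) as [k0 Hk0].
    exists k0. intros k Hk. specialize (Hk0 k Hk). specialize (hlt k). lia. }
  apply is_lim_seq_Reals.
  apply is_lim_seq_ext_loc with (fun k =>
    DimN (Nk k) (sig_of (Nk k) mu) / INR (Nk k) ^ size mu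
    * (INR (chains_nat (pad_zeros (length lam) mu) (N'k k - Nk k) lam)
       / INR (N'k k - Nk k) ^ (size lam - size mu))
    / (DimN (N'k k) (sig_of (N'k k) lam) / INR (N'k k) ^ size lam)
    * (INR (Nk k) / INR (N'k k)) ^ size mu
    * (INR (N'k k - Nk k) / INR (N'k k)) ^ (size lam - size mu)).
  { destruct (hinf (S (length lam))) as [k0 Hk0]. exists k0. intros k Hk.
    specialize (Hk0 k Hk). specialize (hlt k).
    symmetry. apply GT_link_sig_of_factor; auto; lia. }
  rewrite YB_link_frobenius, <- (Rinv_div r' r) by auto.
  assert (Hq0 : r' / r <> 0) by lra.
  apply is_lim_seq_mult'; [apply is_lim_seq_mult'|].
  - apply is_lim_seq_div'; [apply is_lim_seq_mult'| |apply Rgt_not_eq, frobenius_ratio_pos, Hlam].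
    + exact (is_lim_seq_subseq _ _ _ HN (DimN_sig_of_asymptotics mu Hmu)).
    + exact (is_lim_seq_subseq _ _ _ (filterlim_gap Nk N'k _ HN hlt hratio Hq)
               (is_lim_seq_chains_nat mu (length lam) Hmu HmuK lam eq_refl Hlam)).
    + exact (is_lim_seq_subseq _ _ _ HN' (DimN_sig_of_asymptotics lam Hlam)).
  - apply is_lim_seq_pow_nat, is_lim_seq_ratio_inv; auto.
  - apply is_lim_seq_pow_nat, is_lim_seq_gap_ratio; auto.
Qed.
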